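(* Let $G_{ij}$ ($0\le i\le m$, $0\le j\le n$) be an $m\times n$ net in the plane $\mathbb R^2$, let $0\le i_0\le m$, $0\le j_0\le n$, and let points $F_{ij_0}\in I^3$ ($0\le i\le m$) and $F_{i_0j}\in I^3$ ($0\le j\le n$) be given with top views $\overline{F_{ij_0}}=G_{ij_0}$ and $\overline{F_{i_0j}}=G_{i_0j}$. Then there exists a unique $m\times n$ net $F_{ij}$ ($0\le i\le m$, $0\le j\le n$) in $I^3$ having these two parameter lines and top view $\overline{F_{ij}}=G_{ij}$ for all $i,j$.
   Context: $I^3$ is $\mathbb{R}^3$ with coordinates $(x,y,z)$; the top view of $(x,y,z)$ is $(x,y)$. An $m\times n$ net (in $\mathbb R^3$ or $\mathbb R^2$) is a collection of points $F_{ij}$, $0\le i\le m,0\le j\le n$, such that $F_{ij},F_{i+1,j},F_{i+1,j+1},F_{i,j+1}$ are consecutive vertices of a convex planar quadrilateral for all $0\le i<m,0\le j<n$. Its parameter lines are the broken lines $F_{i0}\dots F_{in}$ and $F_{0j}\dots F_{mj}$; the data above are the parameter lines $F_{0j_0}\dots F_{mj_0}$ and $F_{i_00}\dots F_{i_0n}$. *)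

From HB Require Import structures.
From mathcomp Require Import all_boot all_order all_algebra.
Set Implicit Arguments. Unset Strict Implicit. Unset Printing Implicit Defensive.
Import Order.TTheory GRing.Theory Num.Theory.
Local Open Scope ring_scope.

(* Points of R^2 are pairs (x,y); points of I^3 = R^3 are triples ((x,y),z). *)
Definition pt2 (R : realFieldType) := (R * R)%type.
Definition pt3 (R : realFieldType) := (R * R * R)%type.

Section Geo.
Variable R : realFieldType.

Definition top (p : pt3 R) : pt2 R := (p.1.1, p.1.2).

Definition orient2 (a b c : pt2 R) : R :=
  (b.1 - a.1) * (c.2 - a.2) - (b.2 - a.2) * (c.1 - a.1).

(* a, b, c, d are consecutive vertices of a convex quadrilateral in R^2:
   every consecutive triple turns strictly in the same direction *)
Definition convex_quad2 (a b c d : pt2 R) : Prop :=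
  (0 < orient2 a b c /\ 0 < orient2 b c d /\ 0 < orient2 c d a /\ 0 < orient2 d a b)
  \/
  (orient2 a b c < 0 /\ orient2 b c d < 0 /\ orient2 c d a < 0 /\ orient2 d a b < 0).

Definition sub3 (p q : pt3 R) : pt3 R := (p.1.1 - q.1.1, p.1.2 - q.1.2, p.2 - q.2).
Definition cross3 (u v : pt3 R) : pt3 R :=
  (u.1.2 * v.2 - u.2 * v.1.2, u.2 * v.1.1 - u.1.1 * v.2, u.1.1 * v.1.2 - u.1.2 * v.1.1).
Definition dot3 (u v : pt3 R) : R := u.1.1 * v.1.1 + u.1.2 * v.1.2 + u.2 * v.2.

Definition turn3 (a b c : pt3 R) : pt3 R := cross3 (sub3 b a) (sub3 c b).

(* a, b, c, d are consecutive vertices of a convex planar quadrilateral in R^3: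
   the four points are coplanar and the four turning vectors (all normal to the
   plane) point strictly in the same direction *)
Definition convex_planar_quad3 (a b c d : pt3 R) : Prop :=
  dot3 (cross3 (sub3 b a) (sub3 c a)) (sub3 d a) = 0 /\
  let t1 := turn3 d a b in let t2 := turn3 a b c in
  let t3 := turn3 b c d in let t4 := turn3 c d a in
  (0 < dot3 t1 t2 /\ 0 < dot3 t1 t3 /\ 0 < dot3 t1 t4 /\
   0 < dot3 t2 t3 /\ 0 < dot3 t2 t4 /\ 0 < dot3 t3 t4).

(* m x n nets, indexed by F i j for 0 <= i <= m, 0 <= j <= n *)
Definition is_net2 (m n : nat) (G : nat -> nat -> pt2 R) : Prop :=
  forall i j, (i < m)%N -> (j < n)%N ->
    convex_quad2 (G i j) (G i.+1 j) (G i.+1 j.+1) (G i j.+1).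

Definition is_net3 (m n : nat) (F : nat -> nat -> pt3 R) : Prop :=
  forall i j, (i < m)%N -> (j < n)%N ->
    convex_planar_quad3 (F i j) (F i.+1 j) (F i.+1 j.+1) (F i j.+1).

End Geo.

From mathcomp Require Import all_boot all_order all_algebra.
From mathcomp Require Import ring lra zify.
Import Order.TTheory GRing.Theory Num.Theory.
Set Implicit Arguments. Unset Strict Implicit. Unset Printing Implicit Defensive.
Local Open Scope ring_scope.

(* The heights over a planar net are constrained cell by cell by one linear
   equation, the coplanarity of the four lifted vertices, in which each height
   has a nonzero coefficient: the orientation of the top view of the other
   three vertices.  Hence the heights can be propagated from the two given
   parameter lines outwards, each new height being the unique solution of the
   equation of the cell between it and the lines.  Coplanarity together with a
   convex top view already yields a convex planar quadrilateral: the turning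
   vectors of a quadrilateral on the plane z = al x + be y + ga are the
   multiples [o * (-al, -be, 1)] of its normal, the factors [o] being the
   orientations of the top view, which all have the same sign. *)

Section GridFill.

Variables (T : Type) (m n i0 j0 : nat) (z0 : nat -> nat -> T).
Hypotheses (le_i0m : (i0 <= m)%N) (le_j0n : (j0 <= n)%N).

Definition update (z : nat -> nat -> T) a b t x y :=
  if (x == a) && (y == b) then t else z x y.

Definition is_corner (i j x y : nat) := (x \in [:: i; i.+1]) && (y \in [:: j; j.+1]).

Variable cell_ok : nat -> nat -> (nat -> nat -> T) -> Prop.
Variable cell_solve : nat -> nat -> nat -> nat -> (nat -> nat -> T) -> T.

Hypothesis cell_ok_local : forall i j z1 z2,
  (forall x y, is_corner i j x y -> z1 x y = z2 x y) -> cell_ok i j z1 -> cell_ok i j z2.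
Hypothesis cell_solveP : forall i j a b z t, (i < m)%N -> (j < n)%N -> is_corner i j a b ->
  cell_ok i j (update z a b t) <-> t = cell_solve i j a b z.

Lemma update_id z a b : update z a b (z a b) =2 z.
Proof. by move=> x y; rewrite /update; case: andP => // -[/eqP -> /eqP ->]. Qed.

Lemma solve_local i j a b z1 z2 : (i < m)%N -> (j < n)%N -> is_corner i j a b ->
  (forall x y, is_corner i j x y -> ~~ ((x == a) && (y == b)) -> z1 x y = z2 x y) ->
  cell_solve i j a b z1 = cell_solve i j a b z2.
Proof.
move=> lt_im lt_jn corner_ab eq_z; apply/(cell_solveP _ _ lt_im lt_jn corner_ab).
apply: cell_ok_local (_ : cell_ok i j (update z1 a b (cell_solve i j a b z1))).
  by move=> x y corner_xy; rewrite /update; case: ifP => // /negbT; apply: eq_z.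
exact/(cell_solveP _ _ lt_im lt_jn corner_ab).
Qed.

(* The lower index of the cell between [a] and its neighbour one step closer to [c]. *)
Definition toward (c a : nat) := if (c < a)%N then a.-1 else a.

Lemma toward_cell c a M : (c <= M)%N -> (a <= M)%N -> a != c ->
  (toward c a < M)%N /\ a \in [:: toward c a; (toward c a).+1].
Proof.
move=> le_cM le_aM /eqP ne_ac; rewrite /toward !inE.
case: (ltnP c a) => [lt_ca|le_ac]; (split; first lia); apply/orP; [right|left]; apply/eqP; lia.
Qed.

Lemma toward_cell_closer c a x M : (c <= M)%N -> (a <= M)%N -> a != c ->
  x \in [:: toward c a; (toward c a).+1] ->
  [/\ (x <= M)%N, (`|x - c| <= `|a - c|)%N & x != a -> (`|x - c| < `|a - c|)%N].
Proof.
move=> le_cM le_aM /eqP ne_ac; rewrite /toward !inE.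
by case: (ltnP c a) => ? /orP [] /eqP ->; split; try lia; move=> /eqP; lia.
Qed.

Lemma toward_onto c i M : (c <= M)%N -> (i < M)%N ->
  exists a, [/\ (a <= M)%N, a != c & toward c a = i].
Proof.
move=> le_cM lt_iM; rewrite /toward.
case: (leqP c i) => [le_ci|lt_ic]; [exists i.+1 | exists i];
  (split; [lia | apply/eqP; lia | case: ltnP => //; lia]).
Qed.

Definition dist a b := (`|a - i0| + `|b - j0|)%N.

Lemma cell_toward_corners a b : (a <= m)%N -> (b <= n)%N -> a != i0 -> b != j0 ->
  let i := toward i0 a in let j := toward j0 b in
  [/\ (i < m)%N, (j < n)%N, is_corner i j a b &
      forall x y, is_corner i j x y -> ~~ ((x == a) && (y == b)) ->
        [/\ (x <= m)%N, (y <= n)%N & (dist x y < dist a b)%N]].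
Proof.
move=> le_am le_bn ne_ai0 ne_bj0 /=.
have [lt_im a_cell] := toward_cell le_i0m le_am ne_ai0.
have [lt_jn b_cell] := toward_cell le_j0n le_bn ne_bj0.
split; rewrite /is_corner ?a_cell ?b_cell //.
move=> x y /andP [x_cell y_cell]; rewrite negb_and => ne_xy.
have [le_xm dx_le dx_lt] := toward_cell_closer le_i0m le_am ne_ai0 x_cell.
have [le_yn dy_le dy_lt] := toward_cell_closer le_j0n le_bn ne_bj0 y_cell.
by split => //; rewrite /dist; case/orP: ne_xy => [/dx_lt|/dy_lt]; lia.
Qed.

Definition fill_step (z : nat -> nat -> T) a b :=
  if (a == i0) || (b == j0) then z0 a b else cell_solve (toward i0 a) (toward j0 b) a b z.

(* Round [k] of the iteration already fixes every point at [dist] less than [k]. *)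
Definition filled := iter (m + n).+1 fill_step z0.

Lemma fill_step_local z1 z2 a b : (a <= m)%N -> (b <= n)%N ->
  (forall x y, (x <= m)%N -> (y <= n)%N -> (dist x y < dist a b)%N -> z1 x y = z2 x y) ->
  fill_step z1 a b = fill_step z2 a b.
Proof.
move=> le_am le_bn eq_z; rewrite /fill_step; case: ifP => // /norP [ne_ai0 ne_bj0].
have [lt_im lt_jn corner_ab closer] := cell_toward_corners le_am le_bn ne_ai0 ne_bj0.
apply: solve_local => // x y corner_xy ne_xy.
by have [le_xm le_yn lt_d] := closer x y corner_xy ne_xy; apply: eq_z.
Qed.

Lemma iter_fill_step_stable k a b : (a <= m)%N -> (b <= n)%N -> (dist a b <= k)%N ->
  iter k.+1 fill_step z0 a b = iter k fill_step z0 a b.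
Proof.
elim: k a b => [|k IHk] a b le_am le_bn le_dk.
  have -> : a = i0 by rewrite /dist in le_dk; lia.
  by rewrite /= /fill_step eqxx.
rewrite iterS [in RHS]iterS; apply: fill_step_local => // x y le_xm le_yn lt_d.
by apply: IHk => //; lia.
Qed.

Lemma filled_fixpoint a b : (a <= m)%N -> (b <= n)%N -> filled a b = fill_step filled a b.
Proof.
move=> le_am le_bn; rewrite {1}/filled iterS; apply: fill_step_local => // x y le_xm le_yn _.
by rewrite /filled iter_fill_step_stable // /dist; lia.
Qed.

Lemma filled_cross a b : (a <= m)%N -> (b <= n)%N -> a = i0 \/ b = j0 ->
  filled a b = z0 a b.
Proof.
by move=> le_am le_bn on_cross; rewrite filled_fixpoint // /fill_step;
  case: on_cross => ->; rewrite eqxx ?orbT.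
Qed.

Lemma filled_solves a b : (a <= m)%N -> (b <= n)%N -> a != i0 -> b != j0 ->
  filled a b = cell_solve (toward i0 a) (toward j0 b) a b filled.
Proof.
by move=> le_am le_bn ne_ai0 ne_bj0; rewrite filled_fixpoint // /fill_step
  (negbTE ne_ai0) (negbTE ne_bj0).
Qed.

Lemma filled_cell_ok i j : (i < m)%N -> (j < n)%N -> cell_ok i j filled.
Proof.
move=> lt_im lt_jn.
have [a [le_am ne_ai0 <-]] := toward_onto le_i0m lt_im.
have [b [le_bn ne_bj0 <-]] := toward_onto le_j0n lt_jn.
have [lt_im' lt_jn' corner_ab _] := cell_toward_corners le_am le_bn ne_ai0 ne_bj0.
apply: cell_ok_local (_ : cell_ok _ _ (update filled a b (filled a b))).
  by move=> x y _; rewrite update_id.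
by apply/cell_solveP => //; apply: filled_solves.
Qed.

Lemma filled_unique z :
  (forall i j, (i < m)%N -> (j < n)%N -> cell_ok i j z) ->
  (forall a b, (a <= m)%N -> (b <= n)%N -> a = i0 \/ b = j0 -> z a b = z0 a b) ->
  forall a b, (a <= m)%N -> (b <= n)%N -> z a b = filled a b.
Proof.
move=> z_ok z_cross.
suff: forall d a b : nat, (dist a b < d)%N -> (a <= m)%N -> (b <= n)%N -> z a b = filled a b.
  by move=> + a b; apply.
elim=> // d IHd a b lt_d le_am le_bn.
have [/orP on_cross | /norP [ne_ai0 ne_bj0]] := boolP ((a == i0) || (b == j0)).
  have on_cross' : a = i0 \/ b = j0 by case: on_cross => /eqP; tauto.
  by rewrite z_cross ?filled_cross.
have [lt_im lt_jn corner_ab closer] := cell_toward_corners le_am le_bn ne_ai0 ne_bj0.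
rewrite filled_solves //; apply/cell_solveP => //.
apply: cell_ok_local (_ : cell_ok _ _ z) => [x y corner_xy|]; last exact: z_ok.
rewrite /update; case: ifP => [/andP [/eqP -> /eqP ->] //| /negbT ne_xy].
have [le_xm le_yn lt_dxy] := closer x y corner_xy ne_xy.
by apply: IHd => //; lia.
Qed.

End GridFill.

Section Geometry.

Variable R : realFieldType.
Implicit Types (a b c d p q r : pt2 R) (A B C D : pt3 R).

Definition signed_volume A B C D : R := dot3 (cross3 (sub3 B A) (sub3 C A)) (sub3 D A).

Lemma signed_volume_lift a b c d za zb zc zd :
  signed_volume (a, za) (b, zb) (c, zc) (d, zd) =
  orient2 a b c * zd - orient2 d a b * zc + orient2 c d a * zb - orient2 b c d * za.
Proof. by rewrite /signed_volume /orient2 /dot3 /cross3 /sub3 /=; ring. Qed.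

Lemma top_lift p (z : R) : top (p, z) = p.
Proof. by case: p. Qed.

Lemma pt3_lift A : A = (top A, A.2).
Proof. by case: A => [[]]. Qed.

Lemma convex_quad2_orient_neq0 a b c d : convex_quad2 a b c d ->
  [/\ orient2 a b c != 0, orient2 b c d != 0, orient2 c d a != 0 & orient2 d a b != 0].
Proof.
rewrite /convex_quad2 => -[[? [? [? ?]]]|[? [? [? ?]]]].
  by split; apply: lt0r_neq0.
by split; apply: ltr0_neq0.
Qed.

Definition plane (al be ga : R) p := al * p.1 + be * p.2 + ga.

Lemma dot3_turn3_plane al be ga p q r p' q' r' :
  let f := plane al be ga in
  dot3 (turn3 (p, f p) (q, f q) (r, f r)) (turn3 (p', f p') (q', f q') (r', f r')) =
  orient2 p q r * orient2 p' q' r' * (1 + al ^+ 2 + be ^+ 2).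
Proof. by rewrite /= /plane /dot3 /turn3 /cross3 /sub3 /orient2 /=; ring. Qed.

Lemma convex_planar_quad3_plane al be ga a b c d : convex_quad2 a b c d ->
  let f := plane al be ga in
  convex_planar_quad3 (a, f a) (b, f b) (c, f c) (d, f d).
Proof.
move=> convex_abcd f; split.
  change (signed_volume (a, f a) (b, f b) (c, f c) (d, f d) = 0).
  by rewrite signed_volume_lift /f /plane /orient2; ring.
have norm_gt0 : 0 < 1 + al ^+ 2 + be ^+ 2 by nra.
rewrite /= !dot3_turn3_plane !(pmulr_lgt0 _ norm_gt0).
by move: convex_abcd; rewrite /convex_quad2 => -[[? [? [? ?]]]|[? [? [? ?]]]]; do !split; nra.
Qed.

Lemma plane_through a b d (za zb zd : R) : orient2 d a b != 0 ->
  exists al be ga, [/\ plane al be ga a = za, plane al be ga b = zb & plane al be ga d = zd].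
Proof.
rewrite /orient2 => o_neq0.
pose al := ((zb - za) * (d.2 - a.2) - (zd - za) * (b.2 - a.2)) / orient2 d a b.
pose be := ((b.1 - a.1) * (zd - za) - (d.1 - a.1) * (zb - za)) / orient2 d a b.
exists al, be, (za - al * a.1 - be * a.2).
by split; rewrite /plane /al /be /orient2; field.
Qed.

Lemma convex_planar_quad3_coplanar A B C D :
  convex_quad2 (top A) (top B) (top C) (top D) ->
  signed_volume A B C D = 0 -> convex_planar_quad3 A B C D.
Proof.
rewrite (pt3_lift A) (pt3_lift B) (pt3_lift C) (pt3_lift D).
move: (top A) (top B) (top C) (top D) A.2 B.2 C.2 D.2 => a b c d za zb zc zd.
rewrite !top_lift => convex_abcd.
have [_ _ _ o_neq0] := convex_quad2_orient_neq0 convex_abcd.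
have [al [be [ga [<- <- <-]]]] := plane_through za zb zd o_neq0.
move=> vol0; suff -> : zc = plane al be ga c by apply: convex_planar_quad3_plane.
have vol_plane : signed_volume (a, plane al be ga a) (b, plane al be ga b)
    (c, plane al be ga c) (d, plane al be ga d) = 0.
  exact: (convex_planar_quad3_plane al be ga convex_abcd).1.
have : signed_volume (a, plane al be ga a) (b, plane al be ga b) (c, zc) (d, plane al be ga d)
    - signed_volume (a, plane al be ga a) (b, plane al be ga b) (c, plane al be ga c)
        (d, plane al be ga d) = orient2 d a b * (plane al be ga c - zc).
  by rewrite !signed_volume_lift; ring.
rewrite vol0 vol_plane subrr => /esym/eqP.
by rewrite mulf_eq0 (negbTE o_neq0) subr_eq0 => /eqP ->.
Qed.

Definition affine_root (f : R -> R) := - f 0 / (f 1 - f 0).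

Lemma affine_rootP (f : R -> R) s : s != 0 -> (forall t, f t = f 0 + s * t) ->
  forall t, f t = 0 <-> t = affine_root f.
Proof.
move=> s_neq0 f_affine t; rewrite /affine_root.
have -> : f 1 - f 0 = s by rewrite f_affine mulr1 addrC addKr.
rewrite f_affine; split=> [/eqP|->]; last by field.
by rewrite addr_eq0 => /eqP ->; field.
Qed.

End Geometry.

Section NetHeights.

Variables (R : realFieldType) (m n : nat) (G : nat -> nat -> pt2 R).
Hypothesis netG : is_net2 m n G.

Definition lift_net (z : nat -> nat -> R) i j : pt3 R := (G i j, z i j).

Definition cell_volume (z : nat -> nat -> R) i j :=
  signed_volume (lift_net z i j) (lift_net z i.+1 j) (lift_net z i.+1 j.+1) (lift_net z i j.+1).

Definition coplanar_cell i j z := cell_volume z i j = 0.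

Definition solve_cell i j a b z := affine_root (fun t => cell_volume (update z a b t) i j).

Lemma coplanar_cell_local i j z1 z2 :
  (forall x y, is_corner i j x y -> z1 x y = z2 x y) ->
  coplanar_cell i j z1 -> coplanar_cell i j z2.
Proof.
by move=> eq_z; rewrite /coplanar_cell /cell_volume /lift_net !eq_z // /is_corner !inE !eqxx ?orbT.
Qed.

Lemma cell_volume_update i j a b z : (i < m)%N -> (j < n)%N -> is_corner i j a b ->
  exists2 s, s != 0 &
    forall t, cell_volume (update z a b t) i j = cell_volume (update z a b 0) i j + s * t.
Proof.
move=> lt_im lt_jn; have [o1 o2 o3 o4] := convex_quad2_orient_neq0 (netG lt_im lt_jn).
have [iSi jSj] : (i.+1 == i) = false /\ (j.+1 == j) = false by rewrite !gtn_eqF.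
have [iiS jjS] : (i == i.+1) = false /\ (j == j.+1) = false by rewrite !ltn_eqF.
rewrite /is_corner !inE => /andP [/orP [] /eqP -> /orP [] /eqP ->];
  rewrite /cell_volume /lift_net /update !eqxx ?iSi ?jSj ?iiS ?jjS /=;
  [ exists (- orient2 (G i.+1 j) (G i.+1 j.+1) (G i j.+1))
  | exists (orient2 (G i j) (G i.+1 j) (G i.+1 j.+1))
  | exists (orient2 (G i.+1 j.+1) (G i j.+1) (G i j))
  | exists (- orient2 (G i j.+1) (G i j) (G i.+1 j)) ];
  rewrite ?oppr_eq0 // => t; rewrite !signed_volume_lift; ring.
Qed.

Lemma solve_cellP i j a b z t : (i < m)%N -> (j < n)%N -> is_corner i j a b ->
  coplanar_cell i j (update z a b t) <-> t = solve_cell i j a b z.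
Proof.
move=> lt_im lt_jn corner_ab; have [s s_neq0 affine] := cell_volume_update z lt_im lt_jn corner_ab.
by apply: affine_rootP s_neq0 _ t => t'; rewrite affine.
Qed.

Lemma is_net3_lift_netP z : is_net3 m n (lift_net z) <->
  forall i j, (i < m)%N -> (j < n)%N -> coplanar_cell i j z.
Proof.
split=> [netF i j lt_im lt_jn | coplanar_z i j lt_im lt_jn]; first exact: (netF i j lt_im lt_jn).1.
apply: convex_planar_quad3_coplanar; last exact: coplanar_z.
by rewrite /lift_net !top_lift; apply: netG.
Qed.

Lemma lift_net_heights (F : nat -> nat -> pt3 R) a b : top (F a b) = G a b ->
  F a b = lift_net (fun x y => (F x y).2) a b.
Proof. by move=> top_F; rewrite /lift_net -top_F -pt3_lift. Qed.

End NetHeights.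

Theorem lemma10 (R : realFieldType) (m n i0 j0 : nat)
    (G : nat -> nat -> pt2 R) (F0 : nat -> nat -> pt3 R) :
  is_net2 m n G -> (i0 <= m)%N -> (j0 <= n)%N ->
  (forall i j, (i <= m)%N -> (j <= n)%N -> (i = i0 \/ j = j0) ->
     top (F0 i j) = G i j) ->
  exists F : nat -> nat -> pt3 R,
    [/\ is_net3 m n F,
        (forall i j, (i <= m)%N -> (j <= n)%N -> (i = i0 \/ j = j0) ->
           F i j = F0 i j),
        (forall i j, (i <= m)%N -> (j <= n)%N -> top (F i j) = G i j) &
        (forall F' : nat -> nat -> pt3 R,
           is_net3 m n F' ->
           (forall i j, (i <= m)%N -> (j <= n)%N -> (i = i0 \/ j = j0) ->
              F' i j = F0 i j) ->
           (forall i j, (i <= m)%N -> (j <= n)%N -> top (F' i j) = G i j) ->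
           forall i j, (i <= m)%N -> (j <= n)%N -> F' i j = F i j)].
Proof.
move=> netG le_i0m le_j0n top_F0.
have cell_local := @coplanar_cell_local R G.
have cell_solveP := solve_cellP netG.
pose Z := filled m n i0 j0 (fun a b => (F0 a b).2) (solve_cell G).
exists (lift_net G Z); split.
- by apply/(is_net3_lift_netP netG) => i j lt_im lt_jn; apply: filled_cell_ok.
- move=> i j le_im le_jn on_cross.
  by rewrite [RHS](lift_net_heights (top_F0 _ _ _ _ _)) // /lift_net /Z
    (filled_cross _ le_i0m le_j0n cell_local cell_solveP).
- by move=> i j _ _; apply: top_lift.
move=> F' netF' F'_cross top_F' i j le_im le_jn.
pose z' a b := (F' a b).2.
have F'_lift a b : (a <= m)%N -> (b <= n)%N -> F' a b = lift_net G z' a b.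
  by move=> le_am le_bn; apply: lift_net_heights; apply: top_F'.
rewrite F'_lift //; congr (_, _).
apply: (filled_unique le_i0m le_j0n cell_local cell_solveP _ _ le_im le_jn) => [|a b le_am le_bn on_cross].
  apply/(is_net3_lift_netP netG) => x y lt_xm lt_yn.
  have [le_xm le_yn] := (ltnW lt_xm, ltnW lt_yn).
  by rewrite -!F'_lift //; apply: netF'.
by rewrite /z' F'_cross.
Qed.
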